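(* Let $G=K_n$ with $n\ge2$, $F$ regular, $T=F^{-1}(1-1/n)$ and $p=T\cdot(1-1/n)^{n-1}$. Then for every equilibrium $\mathbf{T}'\in\mathcal{N}_{p\cdot\mathbf{1}}$, $$\mathcal{R}(p\cdot\mathbf{1},\mathbf{T}')\ge c\cdot\mathcal{R}(p\cdot\mathbf{1},T\cdot\mathbf{1})$$ for an absolute constant $c>0$ (one may take $c=1/2$).
   Context: Public-goods pricing game on the complete graph $K_n$: buyer $i$'s neighbours are all $j\neq i$. Values i.i.d. with cumulative distribution function $F$, $F(\infty)=1$. An equilibrium for $\mathbf{p}$ is $\mathbf{T}\in[0,\infty]^n$ (buyer $i$ purchases iff $v_i\ge T_i$) with $T_i=p_i/\prod_{j\neq i}F(T_j)$ for all $i$ (convention $c/0=\infty$); $\mathcal{N}_{\mathbf{p}}$ is the set of equilibria; $\mathcal{R}(\mathbf{p},\mathbf{T})=\sum_ip_i(1-F(T_i))$; $p\cdot\mathbf{1}$ is the uniform price vector. $F$ is regular: atomless, supported on an interval in $[0,\infty)$ with positive density $f$ there, and $\phi(x)=x-\frac{1-F(x)}{f(x)}$ non-decreasing. $F^{-1}(q)=\min\{x:F(x)=q\}$. *)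

From Stdlib Require Import Reals Lra Lia.
Open Scope R_scope.

(* Extended non-negative reals [0, +oo] for thresholds. *)
Inductive ext : Type := Fin (x : R) | Inf.

Definition Fext (F : R -> R) (t : ext) : R :=
  match t with Fin x => F x | Inf => 1 end.

Definition ext_div (c q : R) : ext :=
  if Req_EM_T q 0 then Inf else Fin (c / q).

Definition ext_nonneg (t : ext) : Prop :=
  match t with Fin x => 0 <= x | Inf => True end.

Fixpoint prod_except (g : nat -> R) (i m : nat) : R :=
  match m with
  | O => 1
  | S k => prod_except g i k * (if Nat.eqb k i then 1 else g k)
  end.

Fixpoint sum_lt (g : nat -> R) (m : nat) : R :=
  match m with
  | O => 0
  | S k => sum_lt g k + g k
  end.

(* Equilibria on the complete graph K_n for price vector p (buyers 0..n-1):
   T_i = p_i / prod_{j <> i} F(T_j). *)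
Definition equilibrium (F : R -> R) (n : nat) (p : nat -> R) (T : nat -> ext) : Prop :=
  forall i, (i < n)%nat ->
    ext_nonneg (T i) /\
    T i = ext_div (p i) (prod_except (fun j => Fext F (T j)) i n).

Definition revenue (F : R -> R) (n : nat) (p : nat -> R) (T : nat -> ext) : R :=
  sum_lt (fun i => p i * (1 - Fext F (T i))) n.

Definition is_interval (S : R -> Prop) : Prop :=
  forall x y z, S x -> S z -> x <= y -> y <= z -> S y.

Definition interior (S : R -> Prop) (x : R) : Prop :=
  exists d, 0 < d /\ forall y, Rabs (y - x) < d -> S y.

Definition is_cdf (F : R -> R) : Prop :=
  (forall x, 0 <= F x <= 1) /\
  (forall x y, x <= y -> F x <= F y) /\
  (forall eps, 0 < eps -> exists M, forall x, M <= x -> 1 - eps < F x) /\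
  (forall eps, 0 < eps -> exists M, forall x, x <= M -> F x < eps).

(* Regular distribution: atomless (continuous F), supported on an interval S
   of [0,oo) (F = 0 left of S, F = 1 right of S), with a positive density f on S
   (F' = f on the interior of S) and virtual value phi non-decreasing on S. *)
Definition regular (F : R -> R) : Prop :=
  is_cdf F /\
  (forall x, continuity_pt F x) /\
  exists (S : R -> Prop) (f : R -> R),
    is_interval S /\
    (exists x y, S x /\ S y /\ x < y) /\
    (forall x, S x -> 0 <= x) /\
    (forall x, (forall y, S y -> x < y) -> F x = 0) /\
    (forall x, (forall y, S y -> y < x) -> F x = 1) /\
    (forall x, S x -> 0 < f x) /\
    (forall x, interior S x -> derivable_pt_lim F x (f x)) /\
    (forall x y, S x -> S y -> x <= y ->
       x - (1 - F x) / f x <= y - (1 - F y) / f y).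

Definition is_Finv (F : R -> R) (q x : R) : Prop :=
  F x = q /\ forall y, F y = q -> x <= y.

(* Under a uniform price p, the revenue of a threshold profile T' is p times its
   demand D(T') = sum_i (1 - F(T'_i)), the expected number of buyers.  If
   D(T') < 1/2 then, by the Weierstrass product inequality, every buyer sees
   prod_{j <> i} F(T'_j) >= 1 - D(T') > 1/2, so its equilibrium threshold is
   below 2p and it buys with probability at least 1 - F(2p).  Hence every
   equilibrium has demand at least min(1/2, n (1 - F(2p))).  For the price of
   the theorem, (1 - 1/n)^(n-1) <= 1/2 (Bernoulli's inequality) gives 2p <= T,
   so n (1 - F(2p)) >= n (1 - F(T)) = 1, while the symmetric profile T.1 has
   demand exactly 1.  Thus R(p.1, T') >= p/2 = R(p.1, T.1)/2.
   The file proves the finite sum/product facts, the numerical bound, the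
   demand bound for arbitrary monotone F, and finally the theorem. *)

From Stdlib Require Import Reals Lra Lia.
Open Scope R_scope.

Lemma sum_lt_scale (c : R) (h : nat -> R) (m : nat) :
  sum_lt (fun i => c * h i) m = c * sum_lt h m.
Proof. induction m as [|m IH]; simpl; [ring|]. rewrite IH. ring. Qed.

Lemma sum_lt_const (c : R) (m : nat) : sum_lt (fun _ => c) m = INR m * c.
Proof.
  induction m as [|m IH]; simpl sum_lt; [simpl; ring|].
  rewrite IH, S_INR. ring.
Qed.

Lemma sum_lt_ge (h : nat -> R) (c : R) (m : nat) :
  (forall j, (j < m)%nat -> c <= h j) -> INR m * c <= sum_lt h m.
Proof.
  induction m as [|m IH]; intro Hh; simpl sum_lt; [simpl; lra|].
  rewrite S_INR.
  assert (IHm := IH (fun j Hj => Hh j ltac:(lia))).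
  assert (Hm := Hh m ltac:(lia)). lra.
Qed.

Lemma prod_except_weierstrass (g : nat -> R) (i m : nat) :
  (forall j, (j < m)%nat -> 0 <= g j <= 1) ->
  0 <= prod_except g i m <= 1 /\
  1 - sum_lt (fun j => 1 - g j) m <= prod_except g i m.
Proof.
  induction m as [|k IH]; intro Hg; simpl; [lra|].
  destruct IH as [[Hlo Hhi] Hweier]. { intros j Hj; apply Hg; lia. }
  assert (Hk := Hg k (Nat.lt_succ_diag_r k)).
  destruct (Nat.eqb k i); split; try split; nra.
Qed.

Lemma bernoulli (x : R) (k : nat) : 0 <= x -> 1 + INR k * x <= (1 + x) ^ k.
Proof.
  intro Hx. induction k as [|k IH]; [simpl; lra|].
  rewrite S_INR; simpl. assert (0 <= INR k) by apply pos_INR. nra.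
Qed.

(* (1 - 1/n)^(n-1) <= 1/2 for n >= 2: its inverse (1 + 1/(n-1))^(n-1) is at
   least 2 by Bernoulli. *)
Lemma pow_one_minus_inv_le_half (n : nat) :
  (2 <= n)%nat -> (1 - 1 / INR n) ^ (n - 1) <= 1 / 2.
Proof.
  intro Hn. set (m := (n - 1)%nat).
  assert (Hnm : INR n = INR m + 1).
  { unfold m. replace n with (S (n - 1)) at 1 by lia. rewrite S_INR. lra. }
  assert (Hm1 : 1 <= INR m) by (apply (le_INR 1); unfold m; lia).
  assert (Hinverse : (1 - 1 / INR n) * (1 + 1 / INR m) = 1).
  { rewrite Hnm. field. lra. }
  assert (Hbig : 2 <= (1 + 1 / INR m) ^ m).
  { replace 2 with (1 + INR m * (1 / INR m)) by (field; lra).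
    apply bernoulli, Rlt_le, Rdiv_lt_0_compat; lra. }
  assert (Hprod : (1 - 1 / INR n) ^ m * (1 + 1 / INR m) ^ m = 1).
  { rewrite <- Rpow_mult_distr, Hinverse. apply pow1. }
  assert (Hnonneg : 0 <= (1 - 1 / INR n) ^ m).
  { apply pow_le. rewrite Hnm.
    assert (1 / (INR m + 1) <= 1).
    { apply (Rmult_le_reg_l (INR m + 1)); [lra|]. field_simplify; lra. }
    lra. }
  nra.
Qed.

Section MonotoneCdf.

Variable F : R -> R.
Hypothesis F_range : forall x, 0 <= F x <= 1.
Hypothesis F_mono : forall x y, x <= y -> F x <= F y.

Lemma Fext_range (t : ext) : 0 <= Fext F t <= 1.
Proof. destruct t; simpl; [apply F_range|lra]. Qed.

Definition demand (n : nat) (T' : nat -> ext) : R :=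
  sum_lt (fun i => 1 - Fext F (T' i)) n.

Lemma revenue_uniform (n : nat) (p : R) (T' : nat -> ext) :
  revenue F n (fun _ => p) T' = p * demand n T'.
Proof. unfold revenue, demand. apply sum_lt_scale. Qed.

Lemma ext_div_threshold_le (p Q : R) :
  0 <= p -> 1 / 2 < Q -> Fext F (ext_div p Q) <= F (2 * p).
Proof.
  intros Hp HQ. unfold ext_div.
  destruct (Req_EM_T Q 0) as [HQ0|HQ0]; [lra|]. simpl.
  apply F_mono. unfold Rdiv. rewrite (Rmult_comm 2 p).
  apply Rmult_le_compat_l; [lra|].
  replace 2 with (/ (1 / 2)) by field. apply Rinv_le_contravar; lra.
Qed.

Lemma equilibrium_demand_lower (n : nat) (p : R) (T' : nat -> ext) :
  0 <= p -> equilibrium F n (fun _ => p) T' ->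
  Rmin (1 / 2) (INR n * (1 - F (2 * p))) <= demand n T'.
Proof.
  intros Hp Heq.
  destruct (Rle_or_lt (1 / 2) (demand n T')) as [Hhalf|Hsmall].
  - apply Rle_trans with (1 / 2); [apply Rmin_l|exact Hhalf].
  - apply Rle_trans with (INR n * (1 - F (2 * p))); [apply Rmin_r|].
    apply sum_lt_ge. intros i Hi.
    destruct (Heq i Hi) as [_ HTi].
    destruct (prod_except_weierstrass (fun j => Fext F (T' j)) i n)
      as [_ Hweier]; [intros; apply Fext_range|].
    fold (demand n T') in Hweier.
    rewrite HTi.
    assert (Hbuy : Fext F (ext_div p (prod_except (fun j => Fext F (T' j)) i n))
                   <= F (2 * p)) by (apply ext_div_threshold_le; lra).
    lra.
Qed.

End MonotoneCdf.

Lemma regular_F_neg (F : R -> R) (x : R) : regular F -> x < 0 -> F x = 0.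
Proof.
  intros [_ [_ [S [f [_ [[x0 [_ [Sx0 _]]] [HS0 [HF0 _]]]]]]]] Hx.
  apply HF0. intros y Sy. specialize (HS0 y Sy). lra.
Qed.

Theorem lemma3p4 (n : nat) (F : R -> R) (T : R) :
  (2 <= n)%nat ->
  regular F ->
  is_Finv F (1 - 1 / INR n) T ->
  forall T' : nat -> ext,
    equilibrium F n (fun _ => T * (1 - 1 / INR n) ^ (n - 1)) T' ->
    revenue F n (fun _ => T * (1 - 1 / INR n) ^ (n - 1)) T'
      >= 1 / 2 * revenue F n (fun _ => T * (1 - 1 / INR n) ^ (n - 1)) (fun _ => Fin T).
Proof.
  intros Hn Hreg [HFT _] T' Heq.
  pose proof Hreg as [[F_range [F_mono _]] _].
  assert (HnR : 2 <= INR n) by (apply (le_INR 2); lia).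
  set (q := 1 - 1 / INR n) in *.
  assert (Hnq : INR n * (1 - q) = 1) by (unfold q; field; lra).
  assert (Hq : 1 / 2 <= q).
  { unfold q. assert (1 / INR n <= 1 / 2); [|lra].
    apply Rmult_le_compat_l; [lra|]. apply Rinv_le_contravar; lra. }
  assert (HT : 0 <= T).
  { destruct (Rle_or_lt 0 T) as [h|h]; [exact h|].
    rewrite (regular_F_neg F T Hreg h) in HFT. lra. }
  assert (Hqpow := pow_one_minus_inv_le_half n Hn). fold q in Hqpow.
  assert (Hqpow0 : 0 <= q ^ (n - 1)) by (apply pow_le; lra).
  set (p := T * q ^ (n - 1)).
  assert (Hp : 0 <= p) by (unfold p; nra).
  assert (H2p : F (2 * p) <= q) by (rewrite <- HFT; apply F_mono; unfold p; nra).
  assert (Hdemand := equilibrium_demand_lower F F_range F_mono n p T' Hp Heq).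
  rewrite !revenue_uniform.
  assert (Hsym : demand F n (fun _ => Fin T) = 1).
  { unfold demand. rewrite sum_lt_const. simpl. rewrite HFT. exact Hnq. }
  rewrite Hsym. apply Rle_ge.
  assert (Hmin : 1 / 2 <= Rmin (1 / 2) (INR n * (1 - F (2 * p)))).
  { apply Rmin_glb; [lra|]. nra. }
  nra.
Qed.
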